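(* Let $m\in\mathbb{Z}_{>0}\cup\{\infty\}$, $n\ge1$, let $\tilde W$ be the subalgebra of $H(m,1,n)$ generated by $\tau,\tau^{-1},\sigma_1,\dots,\sigma_{n-2}$, and let $\epsilon=\pm1$. For $j\in\{0,\dots,n-1\}$, $\alpha\in\mathfrak{E}_m$ and $w\in\tilde W$, the element $\sigma_j^{\epsilon}\sigma_{j-1}^{\epsilon}\cdots\sigma_1^{\epsilon}\tau^{\alpha}\sigma_1\sigma_2\cdots\sigma_{n-1}w$ equals $\sigma_j^{-\epsilon}\sigma_{j-1}^{-\epsilon}\cdots\sigma_1^{-\epsilon}\tau^{\alpha}\sigma_1\sigma_2\cdots\sigma_{n-1}w$ plus an $\mathcal{A}_m$-linear combination of elements $\sigma_k^{-\epsilon}\sigma_{k-1}^{-\epsilon}\cdots\sigma_1^{-\epsilon}\tau^{\alpha}\sigma_1\sigma_2\cdots\sigma_{n-1}w_k$ with $k<j$ and $w_k\in\tilde W$.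
   Context: $\mathcal{A}_m:=\mathbb{C}[q^{\pm1},v_1^{\pm1},\dots,v_m^{\pm1}]$ for finite $m$, $\mathcal{A}_\infty:=\mathbb{C}[q,q^{-1}]$; $\mathfrak{E}_m:=\{0,\dots,m-1\}$ for finite $m$, $\mathfrak{E}_\infty:=\mathbb{Z}$. $H(m,1,n)$ is the $\mathcal{A}_m$-algebra generated by $\tau,\tau^{-1},\sigma_1,\dots,\sigma_{n-1}$ subject to $\tau\tau^{-1}=\tau^{-1}\tau=1$, $\sigma_i\sigma_{i+1}\sigma_i=\sigma_{i+1}\sigma_i\sigma_{i+1}$, $\sigma_i\sigma_j=\sigma_j\sigma_i$ ($|i-j|>1$), $\tau\sigma_1\tau\sigma_1=\sigma_1\tau\sigma_1\tau$, $\tau\sigma_i=\sigma_i\tau$ ($i>1$), $\sigma_i^2=(q-q^{-1})\sigma_i+1$, and $(\tau-v_1)\cdots(\tau-v_m)=0$ if $m<\infty$. Empty products equal $1$. *)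

From HB Require Import structures.
From mathcomp Require Import all_boot all_order all_algebra.
Set Implicit Arguments. Unset Strict Implicit. Unset Printing Implicit Defensive.
Import Order.TTheory GRing.Theory Num.Theory.
Local Open Scope ring_scope.

(* m : option nat ;  Some k  = finite m = k,  None = m = infinity. *)
Definition mpos (m : option nat) : Prop :=
  match m with Some k => (0 < k)%N | None => True end.

Definition Eset (m : option nat) (a : int) : Prop :=
  match m with Some k => (0 <= a) /\ (a < k%:Z) | None => True end.

Section Hecke.
Variables (R : comNzRingType) (B : algType R).

(* Defining relations of H(m,1,n) for elements tau, taui (= tau^-1),
   sig i (= sigma_i, 1 <= i <= n-1) and sigi i (= sigma_i^-1),
   over the parameters q, qi (= q^-1), v_1..v_m. *)
Definition HeckeRel (m : option nat) (n : nat) (q qi : R) (v : nat -> R)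
    (tau taui : B) (sig sigi : nat -> B) : Prop :=
  q * qi = 1 /\
      (tau * taui = 1 /\ taui * tau = 1) /\
      (forall i, (1 <= i)%N -> (i.+2 <= n)%N ->
         sig i * sig i.+1 * sig i = sig i.+1 * sig i * sig i.+1) /\
      (forall i j, (1 <= i)%N -> (i < n)%N -> (1 <= j)%N -> (j < n)%N ->
         (i.+1 < j)%N \/ (j.+1 < i)%N -> sig i * sig j = sig j * sig i) /\
      ((2 <= n)%N -> tau * sig 1 * tau * sig 1 = sig 1 * tau * sig 1 * tau) /\
      (forall i, (1 < i)%N -> (i < n)%N -> tau * sig i = sig i * tau) /\
      (forall i, (1 <= i)%N -> (i < n)%N ->
         [/\ sig i * sig i = (q - qi) *: sig i + 1,
             sig i * sigi i = 1 & sigi i * sig i = 1]) /\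
    (match m with
       | Some k => (forall i, (1 <= i)%N -> (i <= k)%N -> exists u, v i * u = 1)
                   /\ \prod_(1 <= i < k.+1) (tau - (v i)%:A) = 0
       | None => True end).

Definition tpow (tau taui : B) (a : int) : B :=
  match a with Posz k => tau ^+ k | Negz k => taui ^+ k.+1 end.

(* sigma_i^eps, with eps = +1 encoded as true, eps = -1 as false *)
Definition spow (sig sigi : nat -> B) (e : bool) (i : nat) : B :=
  if e then sig i else sigi i.

Definition desc (sig sigi : nat -> B) (e : bool) (j : nat) : B :=
  \prod_(0 <= k < j) spow sig sigi e (j - k).

Definition asc (sig : nat -> B) (n : nat) : B :=
  \prod_(1 <= i < n) sig i.

Inductive Wt (n : nat) (tau taui : B) (sig : nat -> B) : B -> Prop :=
  | Wt_tau : Wt n tau taui sig tau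
  | Wt_taui : Wt n tau taui sig taui
  | Wt_sig i : (1 <= i)%N -> (i.+2 <= n)%N -> Wt n tau taui sig (sig i)
  | Wt_one : Wt n tau taui sig 1
  | Wt_add x y : Wt n tau taui sig x -> Wt n tau taui sig y -> Wt n tau taui sig (x + y)
  | Wt_scale (c : R) x : Wt n tau taui sig x -> Wt n tau taui sig (c *: x)
  | Wt_mul x y : Wt n tau taui sig x -> Wt n tau taui sig y -> Wt n tau taui sig (x * y).

End Hecke.

From HB Require Import structures.
From mathcomp Require Import all_boot all_order all_algebra.
From mathcomp Require Import zify.
Import Order.TTheory GRing.Theory Num.Theory.
Local Open Scope ring_scope.

(* By the quadratic relation, sigma_{j+1}^eps and
   sigma_{j+1}^-eps differ by a scalar, so the difference at j+1 is
   sigma_{j+1}^eps times the difference at j plus a scalar multiple of a term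
   of index j.  Multiplying a term of index k < j on the left by sigma_{j+1}
   yields a term of the same index: sigma_{j+1} commutes with
   sigma_1, ..., sigma_{j-1} and with tau, and
   sigma_{j+1} sigma_1 ... sigma_{n-1} = sigma_1 ... sigma_{n-1} sigma_j
   by the braid relations, and sigma_j belongs to W~. *)

Section LowerSpan.
Variables (R : comNzRingType) (B : algType R).
Variables (Y : nat -> B -> B) (W : B -> Prop).

Inductive lower_span (j : nat) : B -> Prop :=
  | lower_span0 : lower_span j 0
  | lower_span_gen k w : (k < j)%N -> W w -> lower_span j (Y k w)
  | lower_spanD x y : lower_span j x -> lower_span j y -> lower_span j (x + y)
  | lower_spanZ (c : R) x : lower_span j x -> lower_span j (c *: x).

Lemma lower_span_widen j j' x :
  (j <= j')%N -> lower_span j x -> lower_span j' x.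
Proof.
move=> le_jj'; elim=> [|k w lt_kj Ww|y z _ Hy _ Hz|c y _ Hy].
- exact: lower_span0.
- by apply: lower_span_gen => //; apply: leq_trans le_jj'.
- exact: lower_spanD.
- exact: lower_spanZ.
Qed.

Lemma lower_span_mull j (x z : B) :
  (forall k w, (k < j)%N -> W w -> exists2 w', W w' & x * Y k w = Y k w') ->
  lower_span j z -> lower_span j (x * z).
Proof.
move=> xY; elim=> [|k w lt_kj Ww|y1 y2 _ H1 _ H2|c y _ Hy].
- by rewrite mulr0; apply: lower_span0.
- by have [w' Ww' ->] := xY k w lt_kj Ww; apply: lower_span_gen.
- by rewrite mulrDr; apply: lower_spanD.
- by rewrite -scalerAr; apply: lower_spanZ.
Qed.

Lemma lower_spanP j z :
  lower_span j z -> exists s : seq (nat * R * B),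
    (forall t, t \in s -> (t.1.1 < j)%N /\ W t.2) /\
    z = \sum_(t <- s) t.1.2 *: Y t.1.1 t.2.
Proof.
elim=> [|k w lt_kj Ww|y1 y2 _ [s1 [H1 ->]] _ [s2 [H2 ->]]|c y _ [s [H ->]]].
- by exists [::]; rewrite big_nil.
- exists [:: (k, 1, w)]; rewrite big_seq1 scale1r; split=> // t.
  by rewrite inE => /eqP ->.
- exists (s1 ++ s2); rewrite big_cat; split=> // t.
  by rewrite mem_cat => /orP[/H1|/H2].
- exists [seq (t.1.1, c * t.1.2, t.2) | t <- s]; split.
    by move=> t /mapP[t' /H Ht' ->].
  by rewrite big_map scaler_sumr; apply: eq_bigr => t _; rewrite scalerA.
Qed.

End LowerSpan.

Arguments lower_span {R B}.
Arguments lower_span0 {R B Y W j}.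
Arguments lower_span_gen {R B Y W j}.
Arguments lower_spanD {R B Y W j}.
Arguments lower_spanZ {R B Y W j}.
Arguments lower_span_widen {R B Y W j j' x}.
Arguments lower_span_mull {R B Y W j x z}.
Arguments lower_spanP {R B Y W j z}.

Section HeckeGenerators.
Variables (R : comNzRingType) (B : algType R).

Lemma inv_quadratic (c : R) (s s' : B) :
  s * s = c *: s + 1 -> s' * s = 1 -> s' = s - c%:A.
Proof.
move=> quad inv_l.
have -> : s' = s' * (s * s - c *: s) by rewrite quad addrAC subrr add0r mulr1.
by rewrite mulrBr mulrA inv_l mul1r -scalerAr inv_l.
Qed.

Lemma comm_tpow (tau taui x : B) (a : int) :
  tau * taui = 1 -> taui * tau = 1 -> GRing.comm x tau ->
  GRing.comm x (tpow tau taui a).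
Proof.
move=> tau_taui taui_tau x_tau; case: a => k /=; apply: commrX; rewrite /GRing.comm //.
have -> : x * taui = taui * tau * x * taui by rewrite taui_tau mul1r.
by rewrite -(mulrA taui) -x_tau !mulrA -(mulrA _ tau) tau_taui mulr1.
Qed.

Lemma descS (sig sigi : nat -> B) (e : bool) (j : nat) :
  desc sig sigi e j.+1 = spow sig sigi e j.+1 * desc sig sigi e j.
Proof. by rewrite /desc big_nat_recl. Qed.

Variables (n : nat) (sig : nat -> B).
Hypothesis braid : forall i, (1 <= i)%N -> (i.+2 <= n)%N ->
  sig i * sig i.+1 * sig i = sig i.+1 * sig i * sig i.+1.
Hypothesis far_comm : forall i j, (1 <= i)%N -> (i < n)%N ->
  (1 <= j)%N -> (j < n)%N -> (i.+1 < j)%N \/ (j.+1 < i)%N ->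
  sig i * sig j = sig j * sig i.

Lemma comm_sig_prod i m p :
  (1 <= m)%N -> (p <= n)%N -> (1 <= i)%N -> (i < n)%N ->
  (forall l, (m <= l < p)%N -> (i.+1 < l)%N \/ (l.+1 < i)%N) ->
  GRing.comm (sig i) (\prod_(m <= l < p) sig l).
Proof.
move=> m1 pn i1 i_n far; rewrite big_nat_cond; apply: commr_prod.
move=> l /andP[l_range _]; have := far l l_range.
by move: l_range => /andP[ml lp]; apply: far_comm; lia.
Qed.

Lemma sig_asc i : (1 <= i)%N -> (i.+2 <= n)%N ->
  sig i.+1 * asc sig n = asc sig n * sig i.
Proof.
move=> i1 i_n.
have splitE : asc sig n =
    (\prod_(1 <= l < i) sig l) * (sig i * (sig i.+1 * \prod_(i.+2 <= l < n) sig l)).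
  rewrite /asc (@big_cat_nat _ _ _ i 1 n) //; last lia.
  by congr (_ * _); rewrite big_ltn; last lia; rewrite big_ltn.
have left_comm : GRing.comm (sig i.+1) (\prod_(1 <= l < i) sig l).
  by apply: comm_sig_prod => //; lia.
have right_comm : GRing.comm (sig i) (\prod_(i.+2 <= l < n) sig l).
  by apply: comm_sig_prod => //; lia.
rewrite splitE mulrA left_comm -!mulrA; congr (_ * _).
by rewrite !mulrA -braid // -!mulrA right_comm.
Qed.

Variables (q qi : R) (sigi : nat -> B).
Hypothesis quadratic : forall i, (1 <= i)%N -> (i < n)%N ->
  [/\ sig i * sig i = (q - qi) *: sig i + 1,
      sig i * sigi i = 1 & sigi i * sig i = 1].

Lemma spowE e i : (1 <= i)%N -> (i < n)%N ->
  spow sig sigi e i = sig i - (if e then 0 else q - qi)%:A.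
Proof.
move=> i1 i_n; case: e; first by rewrite scale0r subr0.
by have [quad _ inv_l] := quadratic _ i1 i_n; apply: inv_quadratic.
Qed.

Lemma comm_sig_desc e i k : (1 <= i)%N -> (i < n)%N -> (k.+1 < i)%N ->
  GRing.comm (sig i) (desc sig sigi e k).
Proof.
move=> i1 i_n lt_ki; rewrite /desc big_nat_cond; apply: commr_prod.
move=> l /andP[/andP[_ lt_lk] _].
rewrite spowE; try lia; apply: commrB; last exact/commr_sym/comm_alg.
by apply: far_comm; lia.
Qed.

Variables (tau taui : B) (a : int).
Hypotheses (tau_taui : tau * taui = 1) (taui_tau : taui * tau = 1).
Hypothesis sig_tau : forall i, (1 < i)%N -> (i < n)%N -> tau * sig i = sig i * tau.

Definition desc_term e k w := desc sig sigi e k * tpow tau taui a * asc sig n * w.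

Lemma sig_desc_term e i k w : (1 <= i)%N -> (i.+2 <= n)%N -> (k < i)%N ->
  sig i.+1 * desc_term e k w = desc_term e k (sig i * w).
Proof.
move=> i1 i_n lt_ki.
have comm_desc : GRing.comm (sig i.+1) (desc sig sigi e k).
  by apply: comm_sig_desc; lia.
have comm_tau : GRing.comm (sig i.+1) (tpow tau taui a).
  by apply: comm_tpow => //; rewrite /GRing.comm sig_tau //; lia.
rewrite /desc_term !mulrA comm_desc -(mulrA _ (sig _)) comm_tau.
by rewrite mulrA -(mulrA _ (sig _)) sig_asc // !mulrA.
Qed.

Lemma desc_term_flip e j w : (j < n)%N -> Wt n tau taui sig w ->
  lower_span (desc_term (~~ e)) (Wt n tau taui sig) j
    (desc_term e j w - desc_term (~~ e) j w).
Proof.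
move=> + Ww; elim: j => [|j IHj] lt_jn.
  by rewrite /desc_term /desc !big_nil subrr; apply: lower_span0.
set c := (if ~~ e then 0 else q - qi) - (if e then 0 else q - qi).
have flipE : spow sig sigi e j.+1 = spow sig sigi (~~ e) j.+1 + c%:A.
  by rewrite !spowE // scalerBl addrA subrK.
have stepE : desc_term e j.+1 w - desc_term (~~ e) j.+1 w =
    spow sig sigi e j.+1 * (desc_term e j w - desc_term (~~ e) j w)
    + c *: desc_term (~~ e) j w.
  rewrite /desc_term !descS -!mulrA.
  rewrite flipE mulrBr !mulrDl !mulr_algl.
  by rewrite opprD addrA subrK.
rewrite stepE; apply: lower_spanD; last first.
  by apply: lower_spanZ; apply: lower_span_gen.
apply: (lower_span_widen (leqnSn j)).
rewrite spowE // mulrBl mulr_algl -scaleNr.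
apply: lower_spanD; last exact/lower_spanZ/IHj/ltnW.
apply: lower_span_mull (IHj (ltnW lt_jn)) => k w' lt_kj Ww'.
exists (sig j * w'); last by apply: sig_desc_term => //; lia.
by apply: Wt_mul => //; apply: Wt_sig; lia.
Qed.

End HeckeGenerators.

Theorem mainTheorem7 (R : comNzRingType) (B : algType R) (m : option nat) (n : nat)
    (q qi : R) (v : nat -> R) (tau taui : B) (sig sigi : nat -> B) :
  mpos m -> (1 <= n)%N -> HeckeRel m n q qi v tau taui sig sigi ->
  forall (e : bool) (j : nat) (a : int) (w : B),
    (j < n)%N -> Eset m a -> Wt n tau taui sig w ->
    exists s : seq (nat * R * B),
      (forall t, t \in s -> (t.1.1 < j)%N /\ Wt n tau taui sig t.2) /\
      desc sig sigi e j * tpow tau taui a * asc sig n * w =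
        desc sig sigi (~~ e) j * tpow tau taui a * asc sig n * w +
        \sum_(t <- s) t.1.2 *: (desc sig sigi (~~ e) t.1.1 * tpow tau taui a * asc sig n * t.2).
Proof.
move=> _ _ [_ [[tau_taui taui_tau] [braid [far_comm [_ [sig_tau [quadratic _]]]]]]].
move=> e j a w lt_jn _ Ww.
have [s [Hs sE]] := lower_spanP (@desc_term_flip _ _ _ _ braid far_comm _ _ _
  quadratic _ _ a tau_taui taui_tau sig_tau e j w lt_jn Ww).
by exists s; split=> //; rewrite -sE addrC subrK.
Qed.
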